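(* Let $\Sigma=(X,\mathcal U,\phi)$ be a forward complete control system with input space $\mathcal U=L^\infty(\mathbb R_+,U)$ which has the CEP and BRS properties. If there exists a (possibly non-coercive) ISS Lyapunov function for $\Sigma$, then $\Sigma$ is ISS.
   Context: Let $X$, $U$ be Banach spaces. A forward complete control system is a triple $\Sigma=(X,\mathcal U,\phi)$ with $\phi:\mathbb R_+\times X\times\mathcal U\to X$ such that: $\phi(0,x,u)=x$; (causality) $\phi(t,x,u)=\phi(t,x,\tilde u)$ whenever $u|_{[0,t]}=\tilde u|_{[0,t]}$; for each $(x,u)$ the map $t\mapsto\phi(t,x,u)$ is continuous; (cocycle) $\phi(h,\phi(t,x,u),u(t+\cdot))=\phi(t+h,x,u)$ for all $t,h\ge0$, $x\in X$, $u\in\mathcal U$. Comparison functions: $\mathcal K$ = continuous strictly increasing $\gamma:\mathbb R_+\to\mathbb R_+$ with $\gamma(0)=0$; $\mathcal K_\infty$ = unbounded functions in $\mathcal K$; $\mathcal{KL}$ = $\beta:\mathbb R_+^2\to\mathbb R_+$ with $\beta(\cdot,t)\in\mathcal K$ and $\beta(r,\cdot)$ continuous strictly decreasing with limit $0$ for $r>0$. CEP: $\phi(t,0,0)=0$ for all $t\ge0$ and for every $\varepsilon>0$, $h>0$ there is $\delta>0$ such that $t\in[0,h]$, $\|x\|_X\le\delta$, $\|u\|_{\mathcal U}\le\delta$ imply $\|\phi(t,x,u)\|_X\le\varepsilon$. BRS: for all $C,\tau>0$, $\sup\{\|\phi(t,x,u)\|_X:\|x\|_X\le C,\|u\|_{\mathcal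 U}\le C,t\in[0,\tau]\}<\infty$. ISS: there are $\beta\in\mathcal{KL}$, $\gamma\in\mathcal K$ with $\|\phi(t,x,u)\|_X\le\beta(\|x\|_X,t)+\gamma(\|u\|_{\mathcal U})$ for all $x,u,t\ge0$. Dini derivative along trajectories: $\dot V_u(x)=\limsup_{t\to+0}\frac1t(V(\phi(t,x,u))-V(x))$. A continuous $V:X\to\mathbb R_+$ is a non-coercive ISS Lyapunov function for $\Sigma$ if there exist $\psi_2,\alpha\in\mathcal K_\infty$, $\sigma\in\mathcal K$ with $0<V(x)\le\psi_2(\|x\|_X)$ for all $x\ne0$ and $\dot V_u(x)\le-\alpha(\|x\|_X)+\sigma(\|u\|_{\mathcal U})$ for all $x\in X$, $u\in\mathcal U$. *)

From Stdlib Require Import Reals Lra List ClassicalEpsilon.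
Open Scope R_scope.

Record Banach := {
  car :> Type;
  vzero : car;
  vadd : car -> car -> car;
  vopp : car -> car;
  vscal : R -> car -> car;
  vnorm : car -> R;
  vadd_assoc : forall x y z, vadd x (vadd y z) = vadd (vadd x y) z;
  vadd_comm : forall x y, vadd x y = vadd y x;
  vadd_zero : forall x, vadd x vzero = x;
  vadd_opp : forall x, vadd x (vopp x) = vzero;
  vscal_one : forall x, vscal 1 x = x;
  vscal_assoc : forall a b x, vscal a (vscal b x) = vscal (a * b) x;
  vscal_distr_l : forall a x y, vscal a (vadd x y) = vadd (vscal a x) (vscal a y);
  vscal_distr_r : forall a b x, vscal (a + b) x = vadd (vscal a x) (vscal b x);
  vnorm_nonneg : forall x, 0 <= vnorm x;
  vnorm_eq0 : forall x, vnorm x = 0 -> x = vzero;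
  vnorm_scal : forall a x, vnorm (vscal a x) = Rabs a * vnorm x;
  vnorm_triangle : forall x y, vnorm (vadd x y) <= vnorm x + vnorm y;
  vcomplete : forall s : nat -> car,
    (forall eps, eps > 0 -> exists N, forall n m, (n >= N)%nat -> (m >= N)%nat ->
        vnorm (vadd (s n) (vopp (s m))) < eps) ->
    exists l, forall eps, eps > 0 -> exists N, forall n, (n >= N)%nat ->
        vnorm (vadd (s n) (vopp l)) < eps
}.

Arguments vzero {_}.
Arguments vadd {_}.
Arguments vopp {_}.
Arguments vscal {_}.
Arguments vnorm {_}.

Definition vdist {B : Banach} (x y : B) : R := vnorm (vadd x (vopp y)).

(* m*(S) <= c : for every eta > 0, S is covered by countably many open
   intervals (a n, b n) of total length <= c + eta. *)
Definition outer_le (S : R -> Prop) (c : R) : Prop :=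
  forall eta, eta > 0 -> exists a b : nat -> R,
    (forall n, a n <= b n) /\
    (forall t, S t -> exists n, a n < t < b n) /\
    (forall n, sum_f_R0 (fun k => b k - a k) n <= c + eta).

Definition null_set (S : R -> Prop) : Prop := outer_le S 0.

Definition open_set (G : R -> Prop) : Prop :=
  forall x, G x -> exists d, d > 0 /\ forall y, Rabs (y - x) < d -> G y.

Definition leb_measurable (A : R -> Prop) : Prop :=
  forall eps, eps > 0 -> exists G, open_set G /\ (forall t, A t -> G t) /\
    outer_le (fun t => G t /\ ~ A t) eps.

(* simple functions: finite sums of indicator(A_i) * x_i, A_i measurable *)
Definition simple_eval {U : Banach} (l : list ((R -> Prop) * U)) (t : R) : U :=
  fold_right (fun p acc =>
     vadd (if excluded_middle_informative (fst p t) then snd p else vzero) acc)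
   vzero l.

Definition simple_fun {U : Banach} (l : list ((R -> Prop) * U)) : Prop :=
  Forall (fun p => leb_measurable (fst p)) l.

Definition strongly_measurable {U : Banach} (u : R -> U) : Prop :=
  exists s : nat -> list ((R -> Prop) * U),
    (forall n, simple_fun (s n)) /\
    null_set (fun t => 0 <= t /\
      ~ (forall eps, eps > 0 -> exists N, forall n, (n >= N)%nat ->
            vdist (simple_eval (s n) t) (u t) < eps)).

Definition ess_bounded {U : Banach} (u : R -> U) : Prop :=
  exists M, null_set (fun t => 0 <= t /\ vnorm (u t) > M).

Definition Linf {U : Banach} (u : R -> U) : Prop :=
  strongly_measurable u /\ ess_bounded u.

Definition is_glb (E : R -> Prop) (m : R) : Prop :=
  (forall x, E x -> m <= x) /\ (forall m', (forall x, E x -> m' <= x) -> m' <= m).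

Definition linf_norm {U : Banach} (u : R -> U) : R :=
  epsilon (inhabits 0)
    (is_glb (fun M => 0 <= M /\ null_set (fun t => 0 <= t /\ vnorm (u t) > M))).

Definition ae_eq_on {U : Banach} (t : R) (u v : R -> U) : Prop :=
  null_set (fun s => 0 <= s <= t /\ u s <> v s).

(* phi t x u, meaningful for t >= 0 and u in L^oo; phi is defined on
   representatives, but causality (a.e. version) makes it depend only on
   the equivalence class. *)
Definition control_system {X U : Banach} (phi : R -> X -> (R -> U) -> X) : Prop :=
  (forall x u, Linf u -> phi 0 x u = x) /\
  (forall t x u v, 0 <= t -> Linf u -> Linf v -> ae_eq_on t u v ->
      phi t x u = phi t x v) /\
  (forall x u, Linf u -> forall t, 0 <= t -> forall eps, eps > 0 ->
      exists d, d > 0 /\ forall s, 0 <= s -> Rabs (s - t) < d ->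
        vdist (phi s x u) (phi t x u) < eps) /\
  (forall t h x u, 0 <= t -> 0 <= h -> Linf u ->
      phi h (phi t x u) (fun s => u (t + s)) = phi (t + h) x u).

Definition zero_input {U : Banach} : R -> U := fun _ => vzero.

Definition CEP {X U : Banach} (phi : R -> X -> (R -> U) -> X) : Prop :=
  (forall t, 0 <= t -> phi t vzero zero_input = vzero) /\
  (forall eps h, eps > 0 -> h > 0 -> exists d, d > 0 /\
     forall t x u, 0 <= t <= h -> Linf u -> vnorm x <= d -> linf_norm u <= d ->
       vnorm (phi t x u) <= eps).

Definition BRS {X U : Banach} (phi : R -> X -> (R -> U) -> X) : Prop :=
  forall C tau, C > 0 -> tau > 0 -> exists M,
    forall t x u, 0 <= t <= tau -> Linf u -> vnorm x <= C -> linf_norm u <= C ->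
      vnorm (phi t x u) <= M.

Definition cont_on_Rplus (f : R -> R) : Prop :=
  forall r, 0 <= r -> forall eps, eps > 0 -> exists d, d > 0 /\
    forall s, 0 <= s -> Rabs (s - r) < d -> Rabs (f s - f r) < eps.

Definition class_K (g : R -> R) : Prop :=
  (forall r, 0 <= r -> 0 <= g r) /\
  cont_on_Rplus g /\
  (forall r s, 0 <= r -> r < s -> g r < g s) /\
  g 0 = 0.

Definition class_Kinf (g : R -> R) : Prop :=
  class_K g /\ (forall M, exists r, 0 <= r /\ g r > M).

Definition class_KL (b : R -> R -> R) : Prop :=
  (forall t, 0 <= t -> class_K (fun r => b r t)) /\
  (forall r, r > 0 ->
     cont_on_Rplus (b r) /\
     (forall t s, 0 <= t -> t < s -> b r s < b r t) /\
     (forall eps, eps > 0 -> exists T, forall t, t >= T -> Rabs (b r t) < eps)).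

Definition ISS {X U : Banach} (phi : R -> X -> (R -> U) -> X) : Prop :=
  exists beta gamma, class_KL beta /\ class_K gamma /\
    forall x u t, Linf u -> 0 <= t ->
      vnorm (phi t x u) <= beta (vnorm x) t + gamma (linf_norm u).

Definition limsup0_le (f : R -> R) (c : R) : Prop :=
  forall eps, eps > 0 -> exists d, d > 0 /\ forall t, 0 < t < d -> f t <= c + eps.

Definition dini_le {X U : Banach} (phi : R -> X -> (R -> U) -> X)
  (V : X -> R) (x : X) (u : R -> U) (c : R) : Prop :=
  limsup0_le (fun t => (V (phi t x u) - V x) / t) c.

Definition continuous_on_X {X : Banach} (V : X -> R) : Prop :=
  forall x eps, eps > 0 -> exists d, d > 0 /\
    forall y, vdist y x < d -> Rabs (V y - V x) < eps.

Definition noncoercive_ISS_Lyapunov {X U : Banach}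
  (phi : R -> X -> (R -> U) -> X) (V : X -> R) : Prop :=
  continuous_on_X V /\ (forall x, 0 <= V x) /\
  exists psi2 alpha sigma, class_Kinf psi2 /\ class_Kinf alpha /\ class_K sigma /\
    (forall x, x <> vzero -> 0 < V x <= psi2 (vnorm x)) /\
    (forall x u, Linf u ->
       dini_le phi V x u (- alpha (vnorm x) + sigma (linf_norm u))).

From Stdlib Require Import Reals Lra List ClassicalEpsilon Classical.
Open Scope R_scope.

(* Along any trajectory with 2 sigma(|u|) <= alpha(rho), the Dini estimate makes V decrease
   at rate alpha(rho)/2 as long as the state stays outside the rho-ball.  As
   0 <= V <= psi2(|x|), the state enters that ball within time 2 psi2(|x|)/alpha(rho) + 1, and
   after its last entry V stays below max(psi2(|x|), psi2(rho)).  Combined with CEP on unit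
   windows this yields uniform local stability, and with BRS uniform global boundedness.  These
   uniform estimates give ISS once they are packaged into comparison functions; the required K and
   KL functions are built as tapered suprema of the quantities to be dominated. *)

Definition Rsup (E : R -> Prop) : R := epsilon (inhabits 0) (fun m => is_lub E m).

Lemma Rsup_is_lub E : (exists x, E x) -> bound E -> is_lub E (Rsup E).
Proof.
  intros Hne Hb. unfold Rsup. apply epsilon_spec.
  destruct (completeness E Hb Hne) as [m Hm]. exists m; exact Hm.
Qed.

Lemma glb_of_nonneg E : (exists x, E x) -> (forall x, E x -> 0 <= x) -> exists m, is_glb E m.
Proof.
  intros [x0 Hx0] Hpos.
  set (F := fun y => E (- y)).
  assert (HF : bound F) by (exists 0; intros y Hy; specialize (Hpos _ Hy); lra).
  assert (HFne : exists y, F y) by (exists (- x0); unfold F; rewrite Ropp_involutive; auto).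
  destruct (completeness F HF HFne) as [m [Hub Hlub]].
  exists (- m). split.
  - intros x Hx. assert (HFx : F (- x)) by (unfold F; rewrite Ropp_involutive; auto).
    specialize (Hub _ HFx). lra.
  - intros m' Hm'. assert (m <= - m') by (apply Hlub; intros y Hy; specialize (Hm' _ Hy); lra).
    lra.
Qed.

Lemma Rdiv_nonneg a b : 0 <= a -> 0 < b -> 0 <= a / b.
Proof. intros. unfold Rdiv. apply Rmult_le_pos; [lra | left; apply Rinv_0_lt_compat; lra]. Qed.

Lemma Rdiv_le_compat a a' b b' : 0 <= a -> a <= a' -> 0 < b' -> b' <= b -> a / b <= a' / b'.
Proof.
  intros. unfold Rdiv. apply Rmult_le_compat; try lra.
  - left; apply Rinv_0_lt_compat; lra.
  - apply Rinv_le_contravar; lra.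
Qed.

Lemma Rinv_le_twice_inv r s : 0 < r -> r / 2 <= s -> / s <= 2 * / r.
Proof.
  intros. replace (2 * / r) with (/ (r / 2)) by (field; lra).
  apply Rinv_le_contravar; lra.
Qed.

Lemma continuous_at_of_lipschitz (f : R -> R) r C d : d > 0 -> 0 <= C ->
  (forall s, 0 <= s -> Rabs (s - r) < d -> Rabs (f s - f r) <= C * Rabs (s - r)) ->
  forall eps, eps > 0 -> exists d', d' > 0 /\
    forall s, 0 <= s -> Rabs (s - r) < d' -> Rabs (f s - f r) < eps.
Proof.
  intros Hd HC Hlip eps He.
  exists (Rmin d (eps / (C + 1))). split.
  { apply Rmin_pos; [lra | apply Rdiv_lt_0_compat; lra]. }
  intros s Hs Hsr. pose proof (Rmin_l d (eps / (C + 1))). pose proof (Rmin_r d (eps / (C + 1))).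
  specialize (Hlip s Hs ltac:(lra)).
  assert ((C + 1) * Rabs (s - r) < eps).
  { apply Rmult_lt_reg_r with (/ (C + 1)). apply Rinv_0_lt_compat; lra.
    replace ((C + 1) * Rabs (s - r) * / (C + 1)) with (Rabs (s - r)) by (field; lra).
    unfold Rdiv in *. lra. }
  pose proof (Rabs_pos (s - r)). nra.
Qed.

(** * Comparison functions *)

Lemma K_nonneg g r : class_K g -> 0 <= r -> 0 <= g r.
Proof. intros [H _] Hr; auto. Qed.

Lemma K_lt g r s : class_K g -> 0 <= r -> r < s -> g r < g s.
Proof. intros [_ [_ [H _]]] Hr Hrs. apply H; auto. Qed.

Lemma K_le g r s : class_K g -> 0 <= r -> r <= s -> g r <= g s.
Proof.
  intros Hg Hr Hrs. destruct (Rle_lt_or_eq_dec r s Hrs) as [h | <-].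
  - left; apply K_lt; auto.
  - lra.
Qed.

Lemma K_zero g : class_K g -> g 0 = 0.
Proof. intros [_ [_ [_ H]]]; auto. Qed.

Lemma K_pos g r : class_K g -> 0 < r -> 0 < g r.
Proof. intros Hg Hr. rewrite <- (K_zero g Hg). apply K_lt; auto; lra. Qed.

Lemma K_small g : class_K g ->
  forall eps, eps > 0 -> exists d, d > 0 /\ forall s, 0 <= s <= d -> g s <= eps.
Proof.
  intros Hg eps He. pose proof Hg as [_ [Hc _]].
  destruct (Hc 0 ltac:(lra) eps He) as [d [Hd Hd']]. exists (d / 2). split; [lra |].
  intros s Hs. assert (Hsd : Rabs (s - 0) < d) by (rewrite Rminus_0_r, Rabs_right; lra).
  specialize (Hd' s ltac:(lra) Hsd). rewrite (K_zero g Hg), Rminus_0_r in Hd'.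
  apply Rabs_def2 in Hd'. lra.
Qed.

Lemma Kinf_exceeds g M : class_Kinf g -> 0 <= M -> exists r, 0 < r /\ M < g r.
Proof.
  intros [Hg Hu] HM. destruct (Hu M) as [r [Hr Hr']]. exists r. split; auto.
  destruct (Rle_lt_or_eq_dec 0 r Hr) as [h | <-]; auto.
  rewrite (K_zero g Hg) in Hr'. lra.
Qed.

Lemma KL_at_zero b : class_KL b -> class_K (fun r => b r 0).
Proof. intros [H _]. apply H. lra. Qed.

Lemma K_scale g c : class_K g -> 0 < c -> class_K (fun r => c * g r).
Proof.
  intros Hg Hc. pose proof Hg as [_ [Hcont _]]. repeat split.
  - intros r Hr. pose proof (K_nonneg g r Hg Hr). nra.
  - intros r Hr eps He. destruct (Hcont r Hr (eps / c) (Rdiv_lt_0_compat _ _ He Hc)) as [d [Hd Hd']].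
    exists d. split; auto. intros s Hs Hsr. specialize (Hd' s Hs Hsr).
    rewrite <- Rmult_minus_distr_l, Rabs_mult, (Rabs_right c) by lra.
    apply Rmult_lt_reg_r with (/ c). apply Rinv_0_lt_compat; lra.
    replace (c * Rabs (g s - g r) * / c) with (Rabs (g s - g r)) by (field; lra). exact Hd'.
  - intros r s Hr Hrs. pose proof (K_lt g r s Hg Hr Hrs). nra.
  - rewrite (K_zero g Hg). ring.
Qed.

Definition clamp01 (x : R) : R := Rmax 0 (Rmin 1 x).

Lemma clamp01_bounds x : 0 <= clamp01 x <= 1.
Proof. unfold clamp01, Rmax, Rmin; repeat destruct Rle_dec; lra. Qed.
Lemma clamp01_one x : 1 <= x -> clamp01 x = 1.
Proof. unfold clamp01, Rmax, Rmin; repeat destruct Rle_dec; lra. Qed.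
Lemma clamp01_zero x : x <= 0 -> clamp01 x = 0.
Proof. unfold clamp01, Rmax, Rmin; repeat destruct Rle_dec; lra. Qed.
Lemma clamp01_pos x : 0 < clamp01 x -> 0 < x.
Proof. unfold clamp01, Rmax, Rmin; repeat destruct Rle_dec; lra. Qed.
Lemma clamp01_le x y : x <= y -> clamp01 x <= clamp01 y.
Proof. unfold clamp01, Rmax, Rmin; repeat destruct Rle_dec; lra. Qed.
Lemma clamp01_lipschitz x y : x <= y -> clamp01 y - clamp01 x <= y - x.
Proof. unfold clamp01, Rmax, Rmin; repeat destruct Rle_dec; lra. Qed.

(** * KL majorants *)

(* [P r t p] reads: the value [p] is attained at radius [r] and time [t]. *)
Definition vanishes_at_zero (P : R -> R -> R -> Prop) : Prop :=
  forall eps, eps > 0 -> exists d, d > 0 /\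
    forall r t p, 0 <= r <= d -> 0 <= t -> P r t p -> p <= eps.

Definition bounded_on_balls (P : R -> R -> R -> Prop) : Prop :=
  forall R0, exists M, forall r t p, 0 <= r <= R0 -> 0 <= t -> P r t p -> p <= M.

Definition decays_uniformly (P : R -> R -> R -> Prop) : Prop :=
  forall eps, eps > 0 -> forall R0, exists T,
    forall r t p, 0 <= r <= R0 -> 0 <= t -> T <= t -> P r t p -> p <= eps.

Definition radius_cutoff (r r' : R) : R := clamp01 (2 * r / r' - 1).
Definition time_cutoff (t t' : R) : R := clamp01 (t' + 1 - t).

Lemma radius_cutoff_bounds r r' : 0 <= radius_cutoff r r' <= 1.
Proof. apply clamp01_bounds. Qed.

Lemma time_cutoff_bounds t t' : 0 <= time_cutoff t t' <= 1.
Proof. apply clamp01_bounds. Qed.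

Lemma radius_cutoff_support r r' : 0 < r' -> 0 < radius_cutoff r r' -> r' < 2 * r.
Proof.
  unfold radius_cutoff; intros Hr' Hpos. apply clamp01_pos in Hpos.
  assert (Hq : 1 < 2 * r / r') by lra.
  apply Rmult_lt_reg_r with (/ r'). apply Rinv_0_lt_compat; lra.
  rewrite Rinv_r by lra. unfold Rdiv in Hq. lra.
Qed.

Lemma radius_cutoff_le r r1 r' : 0 < r' -> r <= r1 -> radius_cutoff r r' <= radius_cutoff r1 r'.
Proof.
  intros. unfold radius_cutoff. apply clamp01_le. unfold Rdiv.
  assert (0 < / r') by (apply Rinv_0_lt_compat; lra). nra.
Qed.

Lemma radius_cutoff_lipschitz r r1 r' : 0 < r -> 0 < r' -> r <= r1 ->
  radius_cutoff r1 r' - radius_cutoff r r' <= 2 * (r1 - r) / r.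
Proof.
  intros Hr Hr' Hr1. destruct (Rle_or_lt r' r) as [Hle | Hlt].
  - assert (1 <= r / r').
    { apply Rmult_le_reg_r with r'. lra.
      unfold Rdiv. rewrite Rmult_assoc, Rinv_l by lra. lra. }
    unfold radius_cutoff at 2. rewrite clamp01_one by (unfold Rdiv in *; lra).
    pose proof (radius_cutoff_bounds r1 r'). pose proof (Rdiv_nonneg (2 * (r1 - r)) r).
    lra.
  - unfold radius_cutoff. eapply Rle_trans; [apply clamp01_lipschitz |].
    + unfold Rdiv. assert (0 < / r') by (apply Rinv_0_lt_compat; lra). nra.
    + replace (2 * r1 / r' - 1 - (2 * r / r' - 1)) with (2 * (r1 - r) / r') by (field; lra).
      apply Rdiv_le_compat; lra.
Qed.

Lemma time_cutoff_le t t1 t' : t <= t1 -> time_cutoff t1 t' <= time_cutoff t t'.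
Proof. intros. unfold time_cutoff. apply clamp01_le. lra. Qed.

Lemma time_cutoff_lipschitz t t1 t' : t <= t1 -> time_cutoff t t' - time_cutoff t1 t' <= t1 - t.
Proof.
  intros. unfold time_cutoff. eapply Rle_trans; [apply clamp01_lipschitz with (x := t' + 1 - t1) |];
  lra.
Qed.

Section Envelope.

Variable P : R -> R -> R -> Prop.
Hypothesis P_bounded : bounded_on_balls P.

(* Tapering the samples by cutoffs that are Lipschitz in [r] (away from [0]) and in [t]
   makes their supremum continuous; the term [r / (1 + t)] then forces strict monotonicity. *)
Definition tapered_samples (r t q : R) : Prop :=
  q = 0 \/ exists r' t' p, 0 < r' /\ 0 <= t' /\ P r' t' p /\ 0 <= p /\
    q = p * radius_cutoff r r' * time_cutoff t t'.

Definition envelope (r t : R) : R := Rsup (tapered_samples r t).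

Definition KL_envelope (r t : R) : R := envelope r t + r / (1 + t).

Lemma tapered_sample_le r t q M R0 :
  (forall r' t' p, 0 <= r' <= R0 -> 0 <= t' -> P r' t' p -> p <= M) ->
  2 * r <= R0 -> tapered_samples r t q -> q <= Rmax 0 M.
Proof.
  intros HM Hr [-> | [r' [t' [p [Hr' [Ht' [HP [Hp ->]]]]]]]]; [apply Rmax_l |].
  destruct (radius_cutoff_bounds r r') as [T0 T1]. destruct (time_cutoff_bounds t t') as [K0 K1].
  destruct (Rle_lt_or_eq_dec 0 (radius_cutoff r r') T0) as [Tp | <-].
  - pose proof (radius_cutoff_support r r' Hr' Tp).
    assert (p <= M) by (apply (HM r' t' p); auto; lra).
    pose proof (Rmax_r 0 M).
    assert (radius_cutoff r r' * time_cutoff t t' <= 1) by nra.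
    rewrite Rmult_assoc. nra.
  - rewrite Rmult_0_r, Rmult_0_l. apply Rmax_l.
Qed.

Lemma envelope_is_lub r t : 0 <= r -> is_lub (tapered_samples r t) (envelope r t).
Proof.
  intros Hr. apply Rsup_is_lub; [exists 0; left; auto |].
  destruct (P_bounded (2 * r)) as [M HM]. exists (Rmax 0 M). intros q Hq.
  eapply tapered_sample_le; eauto. lra.
Qed.

Lemma le_envelope r t q : 0 <= r -> tapered_samples r t q -> q <= envelope r t.
Proof. intros Hr Hq. apply (proj1 (envelope_is_lub r t Hr)); auto. Qed.

Lemma envelope_le r t b : 0 <= r -> (forall q, tapered_samples r t q -> q <= b) -> envelope r t <= b.
Proof. intros Hr Hb. apply (proj2 (envelope_is_lub r t Hr)). exact Hb. Qed.

Lemma envelope_nonneg r t : 0 <= r -> 0 <= envelope r t.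
Proof. intros Hr. apply le_envelope; auto. left; auto. Qed.

Lemma envelope_at_zero t : envelope 0 t = 0.
Proof.
  apply Rle_antisym; [| apply envelope_nonneg; lra].
  apply envelope_le; [lra |].
  intros q [-> | [r' [t' [p [Hr' [Ht' [HP [Hp ->]]]]]]]]; [lra |].
  unfold radius_cutoff. rewrite clamp01_zero by (unfold Rdiv; lra). lra.
Qed.

Lemma envelope_le_r r r1 t : 0 <= r -> r <= r1 -> envelope r t <= envelope r1 t.
Proof.
  intros Hr Hr1. apply envelope_le; auto.
  intros q [-> | [r' [t' [p [Hr' [Ht' [HP [Hp ->]]]]]]]]; [apply envelope_nonneg; lra |].
  apply Rle_trans with (p * radius_cutoff r1 r' * time_cutoff t t').
  - pose proof (radius_cutoff_le r r1 r' Hr' Hr1). pose proof (time_cutoff_bounds t t').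
    apply Rmult_le_compat_r; [lra |]. apply Rmult_le_compat_l; lra.
  - apply le_envelope; [lra |]. right. exists r', t', p. repeat split; auto.
Qed.

Lemma envelope_le_t r t t1 : 0 <= r -> t <= t1 -> envelope r t1 <= envelope r t.
Proof.
  intros Hr Ht. apply envelope_le; auto.
  intros q [-> | [r' [t' [p [Hr' [Ht' [HP [Hp ->]]]]]]]]; [apply envelope_nonneg; lra |].
  apply Rle_trans with (p * radius_cutoff r r' * time_cutoff t t').
  - pose proof (time_cutoff_le t t1 t' Ht). pose proof (radius_cutoff_bounds r r').
    apply Rmult_le_compat_l; nra.
  - apply le_envelope; auto. right. exists r', t', p. repeat split; auto.
Qed.

Lemma envelope_lipschitz_r r r1 t M : 0 < r -> r <= r1 ->
  (forall r' t' p, 0 <= r' <= 2 * r1 -> 0 <= t' -> P r' t' p -> p <= M) ->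
  envelope r1 t <= envelope r t + Rmax 0 M * (2 * (r1 - r) / r).
Proof.
  intros Hr Hr1 HM.
  pose proof (Rdiv_nonneg (2 * (r1 - r)) r ltac:(lra) Hr).
  pose proof (Rmax_l 0 M). pose proof (Rmax_r 0 M).
  pose proof (envelope_nonneg r t ltac:(lra)).
  apply envelope_le; [lra |].
  intros q [-> | [r' [t' [p [Hr' [Ht' [HP [Hp ->]]]]]]]]; [nra |].
  destruct (radius_cutoff_bounds r1 r') as [T0 T1]. destruct (time_cutoff_bounds t t') as [K0 K1].
  destruct (Rle_lt_or_eq_dec 0 (radius_cutoff r1 r') T0) as [Tp | <-]; [| nra].
  pose proof (radius_cutoff_support r1 r' Hr' Tp).
  assert (p <= M) by (apply (HM r' t' p); auto; lra).
  assert (p * radius_cutoff r r' * time_cutoff t t' <= envelope r t).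
  { apply le_envelope; [lra |]. right. exists r', t', p. repeat split; auto. }
  pose proof (radius_cutoff_le r r1 r' Hr' Hr1).
  pose proof (radius_cutoff_lipschitz r r1 r' Hr Hr' Hr1).
  assert (p * time_cutoff t t' <= Rmax 0 M) by nra.
  assert (p * time_cutoff t t' * (radius_cutoff r1 r' - radius_cutoff r r')
          <= Rmax 0 M * (2 * (r1 - r) / r)).
  { apply Rle_trans with (Rmax 0 M * (radius_cutoff r1 r' - radius_cutoff r r')).
    - apply Rmult_le_compat_r; lra.
    - apply Rmult_le_compat_l; lra. }
  nra.
Qed.

Lemma envelope_lipschitz_t r t t1 M : 0 <= r -> t <= t1 ->
  (forall r' t' p, 0 <= r' <= 2 * r -> 0 <= t' -> P r' t' p -> p <= M) ->
  envelope r t <= envelope r t1 + Rmax 0 M * (t1 - t).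
Proof.
  intros Hr Ht HM.
  pose proof (Rmax_l 0 M). pose proof (Rmax_r 0 M).
  pose proof (envelope_nonneg r t1 Hr).
  apply envelope_le; auto.
  intros q [-> | [r' [t' [p [Hr' [Ht' [HP [Hp ->]]]]]]]]; [nra |].
  destruct (radius_cutoff_bounds r r') as [T0 T1]. destruct (time_cutoff_bounds t t') as [K0 K1].
  destruct (Rle_lt_or_eq_dec 0 (radius_cutoff r r') T0) as [Tp | <-]; [| nra].
  pose proof (radius_cutoff_support r r' Hr' Tp).
  assert (p <= M) by (apply (HM r' t' p); auto; lra).
  assert (p * radius_cutoff r r' * time_cutoff t1 t' <= envelope r t1).
  { apply le_envelope; auto. right. exists r', t', p. repeat split; auto. }
  pose proof (time_cutoff_le t t1 t' Ht). pose proof (time_cutoff_lipschitz t t1 t' Ht).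
  assert (p * radius_cutoff r r' <= Rmax 0 M) by nra.
  assert (p * radius_cutoff r r' * (time_cutoff t t' - time_cutoff t1 t') <= Rmax 0 M * (t1 - t)).
  { apply Rle_trans with (Rmax 0 M * (time_cutoff t t' - time_cutoff t1 t')).
    - apply Rmult_le_compat_r; nra.
    - apply Rmult_le_compat_l; lra. }
  nra.
Qed.

Lemma envelope_local_lipschitz_r r0 s t M : 0 < r0 -> 0 <= s -> Rabs (s - r0) < r0 / 2 ->
  (forall r' t' p, 0 <= r' <= 4 * r0 -> 0 <= t' -> P r' t' p -> p <= M) ->
  Rabs (envelope s t - envelope r0 t) <= 4 * Rmax 0 M * / r0 * Rabs (s - r0).
Proof.
  intros Hr0 Hs Hsr HM. apply Rabs_def2 in Hsr.
  set (K := Rmax 0 M). assert (HK : 0 <= K) by apply Rmax_l.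
  assert (0 < / r0) by (apply Rinv_0_lt_compat; lra).
  destruct (Rle_or_lt r0 s) as [Hrs | Hrs].
  - assert (envelope s t <= envelope r0 t + K * (2 * (s - r0) / r0)).
    { apply envelope_lipschitz_r; auto. intros r' t' p Hr' Ht' HP. apply (HM r' t' p); auto. lra. }
    pose proof (envelope_le_r r0 s t ltac:(lra) Hrs).
    rewrite Rabs_right by lra. rewrite Rabs_right by lra. unfold Rdiv in *.
    assert (0 <= K * (s - r0) * / r0) by (apply Rmult_le_pos; [apply Rmult_le_pos |]; lra).
    nra.
  - assert (envelope r0 t <= envelope s t + K * (2 * (r0 - s) / s)).
    { apply envelope_lipschitz_r; [lra | lra |].
      intros r' t' p Hr' Ht' HP. apply (HM r' t' p); auto. lra. }
    pose proof (envelope_le_r s r0 t Hs ltac:(lra)).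
    rewrite Rabs_left1 by lra. rewrite Rabs_left by lra.
    pose proof (Rinv_le_twice_inv r0 s Hr0 ltac:(lra)). unfold Rdiv in *.
    assert (0 <= K * (r0 - s)) by nra.
    assert (K * (2 * (r0 - s) * / s) <= 4 * K * / r0 * (r0 - s)).
    { replace (K * (2 * (r0 - s) * / s)) with (2 * (K * (r0 - s)) * / s) by ring.
      replace (4 * K * / r0 * (r0 - s)) with (2 * (K * (r0 - s)) * (2 * / r0)) by ring.
      apply Rmult_le_compat_l; lra. }
    lra.
Qed.


Hypothesis P_vanishes : vanishes_at_zero P.
Hypothesis P_decays : decays_uniformly P.

Lemma envelope_majorizes r t p : 0 <= r -> 0 <= t -> P r t p -> p <= envelope r t.
Proof.
  intros Hr Ht HP. pose proof (envelope_nonneg r t Hr).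
  destruct (Rle_or_lt p 0) as [Hp | Hp]; [lra |].
  destruct (Rle_lt_or_eq_dec 0 r Hr) as [Hr' | <-].
  - apply le_envelope; auto. right. exists r, t, p. repeat split; auto; try lra.
    unfold radius_cutoff, time_cutoff. rewrite (clamp01_one (t + 1 - t)) by lra.
    rewrite (clamp01_one (2 * r / r - 1)); [ring |].
    unfold Rdiv. rewrite Rmult_assoc, Rinv_r by lra. lra.
  - destruct (P_vanishes (p / 2)) as [d [Hd Hd']]; [lra |].
    assert (p <= p / 2) by (apply (Hd' 0 t p); auto; lra). lra.
Qed.

Lemma envelope_small eps : eps > 0 -> exists d, d > 0 /\
  forall r t, 0 <= r <= d -> envelope r t <= eps.
Proof.
  intros He. destruct (P_vanishes eps He) as [d [Hd Hd']].
  exists (d / 2). split; [lra |]. intros r t Hr. apply envelope_le; [lra |].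
  intros q [-> | [r' [t' [p [Hr' [Ht' [HP [Hp ->]]]]]]]]; [lra |].
  destruct (radius_cutoff_bounds r r') as [T0 T1]. destruct (time_cutoff_bounds t t') as [K0 K1].
  destruct (Rle_lt_or_eq_dec 0 (radius_cutoff r r') T0) as [Tp | <-]; [| lra].
  pose proof (radius_cutoff_support r r' Hr' Tp).
  assert (p <= eps) by (apply (Hd' r' t' p); auto; lra).
  assert (radius_cutoff r r' * time_cutoff t t' <= 1) by nra. rewrite Rmult_assoc. nra.
Qed.

Lemma envelope_decays eps r : eps > 0 -> 0 <= r ->
  exists T, 0 <= T /\ forall t, T <= t -> envelope r t <= eps.
Proof.
  intros He Hr. destruct (P_decays eps He (2 * r)) as [T0 HT0].
  exists (Rmax 0 (T0 + 1)). split; [apply Rmax_l |]. intros t Ht.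
  pose proof (Rmax_l 0 (T0 + 1)). pose proof (Rmax_r 0 (T0 + 1)).
  apply envelope_le; auto.
  intros q [-> | [r' [t' [p [Hr' [Ht' [HP [Hp ->]]]]]]]]; [lra |].
  destruct (radius_cutoff_bounds r r') as [T0' T1]. destruct (time_cutoff_bounds t t') as [K0 K1].
  destruct (Rle_lt_or_eq_dec 0 (radius_cutoff r r') T0') as [Tp | <-]; [| lra].
  destruct (Rle_lt_or_eq_dec 0 (time_cutoff t t') K0) as [Kp | <-]; [| lra].
  pose proof (radius_cutoff_support r r' Hr' Tp). unfold time_cutoff in Kp. apply clamp01_pos in Kp.
  assert (p <= eps) by (apply (HT0 r' t' p); auto; lra).
  assert (radius_cutoff r r' * time_cutoff t t' <= 1) by nra. rewrite Rmult_assoc. nra.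
Qed.

Lemma div_1pt_bounds r t : 0 <= r -> 0 <= t -> 0 <= r / (1 + t) <= r.
Proof.
  intros. split; [apply Rdiv_nonneg; lra |].
  apply Rmult_le_reg_r with (1 + t); [lra |].
  unfold Rdiv. rewrite Rmult_assoc, Rinv_l by lra. nra.
Qed.

Lemma div_1pt_lt_r r s t : 0 <= t -> r < s -> r / (1 + t) < s / (1 + t).
Proof. intros. unfold Rdiv. apply Rmult_lt_compat_r; [apply Rinv_0_lt_compat |]; lra. Qed.

Lemma div_1pt_lt_t r s t : 0 < r -> 0 <= t -> t < s -> r / (1 + s) < r / (1 + t).
Proof. intros. unfold Rdiv. apply Rmult_lt_compat_l; [lra |]. apply Rinv_lt_contravar; nra. Qed.

Lemma div_1pt_lipschitz_r r s t : 0 <= t -> Rabs (s / (1 + t) - r / (1 + t)) <= Rabs (s - r).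
Proof.
  intros Ht. replace (s / (1 + t) - r / (1 + t)) with ((s - r) * / (1 + t)) by (field; lra).
  rewrite Rabs_mult, (Rabs_right (/ (1 + t))) by (left; apply Rinv_0_lt_compat; lra).
  assert (/ (1 + t) <= 1) by (rewrite <- Rinv_1; apply Rinv_le_contravar; lra).
  pose proof (Rabs_pos (s - r)). pose proof (Rinv_0_lt_compat (1 + t) ltac:(lra)). nra.
Qed.

Lemma div_1pt_lipschitz_t r s t : 0 <= r -> 0 <= s -> 0 <= t ->
  Rabs (r / (1 + s) - r / (1 + t)) <= r * Rabs (s - t).
Proof.
  intros.
  replace (r / (1 + s) - r / (1 + t)) with ((r * (t - s)) * / ((1 + s) * (1 + t))) by (field; lra).
  rewrite Rabs_mult, (Rabs_right (/ _)) by (left; apply Rinv_0_lt_compat; nra).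
  rewrite Rabs_mult, (Rabs_right r), (Rabs_minus_sym t s) by lra.
  assert (/ ((1 + s) * (1 + t)) <= 1) by (rewrite <- Rinv_1; apply Rinv_le_contravar; nra).
  pose proof (Rinv_0_lt_compat ((1 + s) * (1 + t)) ltac:(nra)).
  pose proof (Rabs_pos (s - t)). assert (0 <= r * Rabs (s - t)) by nra. nra.
Qed.

Lemma div_1pt_small r eps t : 0 <= r -> eps > 0 -> 0 <= t -> 2 * r / eps <= t ->
  r / (1 + t) < eps / 2.
Proof.
  intros. assert (2 * r <= eps * t).
  { apply Rmult_le_reg_r with (/ eps). apply Rinv_0_lt_compat; lra.
    replace (eps * t * / eps) with t by (field; lra). unfold Rdiv in *. lra. }
  apply Rmult_lt_reg_r with (2 * (1 + t)); [lra |].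
  replace (r / (1 + t) * (2 * (1 + t))) with (2 * r) by (field; lra).
  replace (eps / 2 * (2 * (1 + t))) with (eps + eps * t) by (field; lra). lra.
Qed.

Lemma KL_envelope_continuous_r t : 0 <= t -> cont_on_Rplus (fun r => KL_envelope r t).
Proof.
  intros Ht r0 Hr0. destruct (Rle_lt_or_eq_dec 0 r0 Hr0) as [Hp | <-].
  - destruct (P_bounded (4 * r0)) as [M HM].
    apply (continuous_at_of_lipschitz (fun r => KL_envelope r t) r0 (4 * Rmax 0 M * / r0 + 1) (r0 / 2));
      [lra | |].
    { pose proof (Rmax_l 0 M). pose proof (Rinv_0_lt_compat r0 Hp).
      assert (0 <= 4 * Rmax 0 M * / r0) by (apply Rmult_le_pos; lra). lra. }
    intros s Hs Hsr. unfold KL_envelope.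
    pose proof (envelope_local_lipschitz_r r0 s t M Hp Hs Hsr HM).
    pose proof (div_1pt_lipschitz_r r0 s t Ht).
    replace (envelope s t + s / (1 + t) - (envelope r0 t + r0 / (1 + t)))
      with ((envelope s t - envelope r0 t) + (s / (1 + t) - r0 / (1 + t))) by ring.
    eapply Rle_trans; [apply Rabs_triang |]. lra.
  - intros eps He. destruct (envelope_small (eps / 2) ltac:(lra)) as [d [Hd Hd']].
    exists (Rmin d (eps / 2)). split; [apply Rmin_pos; lra |].
    intros s Hs Hsd. rewrite Rminus_0_r, Rabs_right in Hsd by lra.
    pose proof (Rmin_l d (eps / 2)). pose proof (Rmin_r d (eps / 2)).
    unfold KL_envelope. rewrite envelope_at_zero.
    pose proof (Hd' s t ltac:(lra)). pose proof (envelope_nonneg s t Hs).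
    pose proof (div_1pt_bounds s t Hs Ht). unfold Rdiv at 2. rewrite Rmult_0_l.
    rewrite Rplus_0_r, Rminus_0_r, Rabs_right by lra. lra.
Qed.

Lemma KL_envelope_continuous_t r : 0 <= r -> cont_on_Rplus (KL_envelope r).
Proof.
  intros Hr t0 Ht0. destruct (P_bounded (2 * r)) as [M HM]. set (K := Rmax 0 M).
  assert (HK : 0 <= K) by apply Rmax_l.
  apply (continuous_at_of_lipschitz (KL_envelope r) t0 (K + r) 1); [lra | lra |].
  intros s Hs _.
  assert (Rabs (envelope r s - envelope r t0) <= K * Rabs (s - t0)).
  { destruct (Rle_or_lt t0 s) as [Hts | Hts].
    - pose proof (envelope_lipschitz_t r t0 s M Hr Hts HM) as Hlip.
      pose proof (envelope_le_t r t0 s Hr Hts).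
      rewrite Rabs_left1, Rabs_right by lra. fold K in Hlip. lra.
    - pose proof (envelope_lipschitz_t r s t0 M Hr ltac:(lra) HM) as Hlip.
      pose proof (envelope_le_t r s t0 Hr ltac:(lra)).
      rewrite Rabs_right, Rabs_left by lra. fold K in Hlip. lra. }
  pose proof (div_1pt_lipschitz_t r s t0 Hr Hs Ht0).
  unfold KL_envelope.
  replace (envelope r s + r / (1 + s) - (envelope r t0 + r / (1 + t0)))
    with ((envelope r s - envelope r t0) + (r / (1 + s) - r / (1 + t0))) by ring.
  eapply Rle_trans; [apply Rabs_triang |]. lra.
Qed.

Lemma KL_envelope_class_KL : class_KL KL_envelope.
Proof.
  split.
  - intros t Ht. repeat split.
    + intros r Hr. unfold KL_envelope.
      pose proof (envelope_nonneg r t Hr). pose proof (div_1pt_bounds r t Hr Ht). lra.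
    + apply KL_envelope_continuous_r; auto.
    + intros r s Hr Hrs. unfold KL_envelope.
      pose proof (envelope_le_r r s t Hr ltac:(lra)). pose proof (div_1pt_lt_r r s t Ht Hrs). lra.
    + unfold KL_envelope. rewrite envelope_at_zero. unfold Rdiv. ring.
  - intros r Hr. repeat split.
    + apply KL_envelope_continuous_t; lra.
    + intros t s Ht Hts. unfold KL_envelope.
      pose proof (envelope_le_t r t s ltac:(lra) ltac:(lra)).
      pose proof (div_1pt_lt_t r s t Hr Ht Hts). lra.
    + intros eps He. destruct (envelope_decays (eps / 2) r ltac:(lra) ltac:(lra)) as [T1 [HT1 HT1']].
      exists (Rmax T1 (2 * r / eps)). intros t Ht.
      pose proof (Rmax_l T1 (2 * r / eps)). pose proof (Rmax_r T1 (2 * r / eps)).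
      pose proof (HT1' t ltac:(lra)). pose proof (envelope_nonneg r t ltac:(lra)).
      pose proof (div_1pt_small r eps t ltac:(lra) He ltac:(lra) ltac:(lra)).
      pose proof (div_1pt_bounds r t ltac:(lra) ltac:(lra)).
      unfold KL_envelope. rewrite Rabs_right by lra. lra.
Qed.

End Envelope.

Theorem KL_majorant (P : R -> R -> R -> Prop) :
  vanishes_at_zero P -> bounded_on_balls P -> decays_uniformly P ->
  exists beta, class_KL beta /\ forall r t p, 0 <= r -> 0 <= t -> P r t p -> p <= beta r t.
Proof.
  intros Hvan Hbnd Hdec. exists (KL_envelope P). split.
  - apply KL_envelope_class_KL; auto.
  - intros r t p Hr Ht HP. unfold KL_envelope.
    pose proof (envelope_majorizes P Hbnd Hvan r t p Hr Ht HP).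
    pose proof (div_1pt_bounds r t Hr Ht). lra.
Qed.

Corollary K_majorant (P : R -> R -> Prop) :
  (forall eps, eps > 0 -> exists d, d > 0 /\ forall r p, 0 <= r <= d -> P r p -> p <= eps) ->
  (forall R0, exists M, forall r p, 0 <= r <= R0 -> P r p -> p <= M) ->
  exists g, class_K g /\ forall r p, 0 <= r -> P r p -> p <= g r.
Proof.
  intros Hvan Hbnd.
  destruct (KL_majorant (fun r t p => t = 0 /\ P r p)) as [beta [Hbeta Hmaj]].
  - intros eps He. destruct (Hvan eps He) as [d [Hd Hd']].
    exists d. split; auto. intros r t p Hr _ [_ HP]. exact (Hd' r p Hr HP).
  - intros R0. destruct (Hbnd R0) as [M HM]. exists M. intros r t p Hr _ [_ HP]. exact (HM r p Hr HP).
  - intros eps He R0. exists 1. intros r t p _ _ HT [-> _]. lra.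
  - exists (fun r => beta r 0). split; [apply KL_at_zero; auto |].
    intros r p Hr HP. apply Hmaj; auto; lra.
Qed.

(** * Real induction and a comparison principle for Dini derivatives *)

Lemma real_induction (Q : R -> Prop) a b : a <= b -> Q a ->
  (forall m, a < m <= b -> (forall s, a <= s < m -> Q s) -> Q m) ->
  (forall m, a <= m < b -> (forall s, a <= s <= m -> Q s) ->
     exists h, h > 0 /\ m + h <= b /\ forall s, m < s <= m + h -> Q s) ->
  Q b.
Proof.
  intros Hab Ha Hleft Hright.
  set (S := fun s => a <= s <= b /\ forall s', a <= s' <= s -> Q s').
  assert (HSa : S a) by (split; [lra | intros s' Hs'; replace s' with a by lra; auto]).
  assert (HSb : bound S) by (exists b; intros s [Hs _]; lra).
  destruct (completeness S HSb (ex_intro _ a HSa)) as [m [Hub Hlub]].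
  assert (Ham : a <= m) by (apply Hub; auto).
  assert (Hmb : m <= b) by (apply Hlub; intros s [Hs _]; lra).
  assert (Hbelow : forall s, a <= s < m -> Q s).
  { intros s Hs. destruct (classic (exists s1, S s1 /\ s < s1)) as [[s1 [[_ Hs1] Hss1]] | Hno].
    - apply Hs1. lra.
    - exfalso. assert (m <= s); [| lra]. apply Hlub. intros s1 HS1.
      destruct (Rle_or_lt s1 s) as [h | h]; auto. exfalso; apply Hno; exists s1; auto. }
  assert (Hupto : forall s, a <= s <= m -> Q s).
  { intros s Hs. destruct (Rle_lt_or_eq_dec s m ltac:(lra)) as [h | ->]; [apply Hbelow; lra |].
    destruct (Rle_lt_or_eq_dec a m Ham) as [h | <-]; [apply Hleft; auto; lra | auto]. }
  destruct (Rle_lt_or_eq_dec m b Hmb) as [Hlt | <-]; [| apply Hupto; lra].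
  exfalso. destruct (Hright m ltac:(lra) Hupto) as [h [Hh [Hhb Hext]]].
  assert (HSmh : S (m + h)).
  { split; [lra |]. intros s Hs. destruct (Rle_or_lt s m); [apply Hupto | apply Hext]; lra. }
  specialize (Hub _ HSmh). lra.
Qed.

Definition continuous_on_interval (f : R -> R) (a b : R) : Prop :=
  forall s, a <= s <= b -> forall eps, eps > 0 -> exists d, d > 0 /\
    forall s', a <= s' <= b -> Rabs (s' - s) < d -> Rabs (f s' - f s) < eps.

Lemma continuous_on_interval_add_linear f k a b : continuous_on_interval f a b ->
  continuous_on_interval (fun s => f s + k * (s - a)) a b.
Proof.
  intros Hf s Hs eps He. destruct (Hf s Hs (eps / 2) ltac:(lra)) as [d [Hd Hd']].
  pose proof (Rabs_pos k).
  set (d2 := eps / 2 / (Rabs k + 1)).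
  assert (Hd2 : d2 > 0) by (apply Rdiv_lt_0_compat; lra).
  exists (Rmin d d2). split; [apply Rmin_pos; lra |].
  intros s' Hs' Hss. pose proof (Rmin_l d d2). pose proof (Rmin_r d d2).
  specialize (Hd' s' Hs' ltac:(lra)).
  replace (f s' + k * (s' - a) - (f s + k * (s - a))) with ((f s' - f s) + k * (s' - s)) by ring.
  eapply Rle_lt_trans; [apply Rabs_triang |]. rewrite Rabs_mult.
  assert (Rabs k * Rabs (s' - s) <= Rabs k * d2) by (apply Rmult_le_compat_l; lra).
  assert (Rabs k * d2 < eps / 2).
  { replace (Rabs k * d2) with ((Rabs k + 1) * d2 - d2) by ring.
    replace ((Rabs k + 1) * d2) with (eps / 2) by (unfold d2; field; lra). lra. }
  lra.
Qed.

Lemma decrease_of_dini_bound_eps (f : R -> R) a b c eps : a <= b -> eps > 0 ->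
  continuous_on_interval f a b ->
  (forall s, a < s < b -> limsup0_le (fun h => (f (s + h) - f s) / h) (- c)) ->
  f b + (c - eps) * (b - a) <= f a + eps.
Proof.
  intros Hab He Hf Hdini.
  set (g := fun s => f s + (c - eps) * (s - a)).
  assert (Hg : continuous_on_interval g a b) by (apply continuous_on_interval_add_linear; auto).
  enough (g b <= g a + eps) by (unfold g in *; lra).
  apply (real_induction (fun s => g s <= g a + eps) a b); [lra | lra | |].
  - intros m Hm Hbelow. destruct (Rle_or_lt (g m) (g a + eps)) as [h | h]; auto. exfalso.
    destruct (Hg m ltac:(lra) (g m - (g a + eps)) ltac:(lra)) as [d [Hd Hd']].
    set (s := Rmax a (m - d / 2)).
    assert (a <= s) by apply Rmax_l. assert (m - d / 2 <= s) by apply Rmax_r.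
    assert (s < m) by (unfold s, Rmax; destruct Rle_dec; lra).
    assert (Hsm : Rabs (s - m) < d) by (rewrite Rabs_left by lra; lra).
    specialize (Hd' s ltac:(lra) Hsm). specialize (Hbelow s ltac:(lra)).
    apply Rabs_def2 in Hd'. lra.
  - intros m Hm Hupto. pose proof (Hupto m ltac:(lra)) as Hgm.
    destruct (Rle_lt_or_eq_dec a m (proj1 Hm)) as [Ham | <-].
    + destruct (Hdini m ltac:(lra) (eps / 2) ltac:(lra)) as [d [Hd Hd']].
      exists (Rmin (d / 2) (b - m)). pose proof (Rmin_l (d / 2) (b - m)).
      pose proof (Rmin_r (d / 2) (b - m)). split; [apply Rmin_pos; lra | split; [lra |]].
      intros s Hs. specialize (Hd' (s - m) ltac:(lra)). replace (m + (s - m)) with s in Hd' by ring.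
      assert (f s - f m <= (- c + eps / 2) * (s - m)).
      { apply Rmult_le_reg_r with (/ (s - m)). apply Rinv_0_lt_compat; lra.
        replace ((- c + eps / 2) * (s - m) * / (s - m)) with (- c + eps / 2) by (field; lra).
        unfold Rdiv in Hd'. lra. }
      unfold g in *. nra.
    + destruct (Hg a ltac:(lra) eps He) as [d [Hd Hd']].
      exists (Rmin (d / 2) (b - a)). pose proof (Rmin_l (d / 2) (b - a)).
      pose proof (Rmin_r (d / 2) (b - a)). split; [apply Rmin_pos; lra | split; [lra |]].
      intros s Hs. assert (Hsa : Rabs (s - a) < d) by (rewrite Rabs_right by lra; lra).
      specialize (Hd' s ltac:(lra) Hsa). apply Rabs_def2 in Hd'. lra.
Qed.

Theorem decrease_of_dini_bound (f : R -> R) a b c : a <= b -> continuous_on_interval f a b ->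
  (forall s, a < s < b -> limsup0_le (fun h => (f (s + h) - f s) / h) (- c)) ->
  f b <= f a - c * (b - a).
Proof.
  intros Hab Hf Hdini.
  destruct (Rle_or_lt (f b) (f a - c * (b - a))) as [h | h]; auto. exfalso.
  set (D := f b - (f a - c * (b - a))).
  set (eps := D / (2 * (b - a + 1))).
  assert (Heps : eps > 0) by (apply Rdiv_lt_0_compat; unfold D; lra).
  pose proof (decrease_of_dini_bound_eps f a b c eps Hab Heps Hf Hdini).
  assert (eps * (b - a + 1) = D / 2) by (unfold eps; field; lra).
  unfold D in *. nra.
Qed.

Lemma last_time_below (g : R -> R) t rho : 0 <= t -> continuous_on_interval g 0 t ->
  (exists s0, 0 <= s0 <= t /\ g s0 <= rho) ->
  exists m, 0 <= m <= t /\ g m <= rho /\ forall s, m < s <= t -> rho < g s.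
Proof.
  intros Ht Hg [s0 [Hs0 Hg0]].
  set (S := fun s => 0 <= s <= t /\ g s <= rho).
  assert (HSb : bound S) by (exists t; intros s [Hs _]; lra).
  destruct (completeness S HSb (ex_intro _ s0 (conj Hs0 Hg0))) as [m [Hub Hlub]].
  assert (s0 <= m) by (apply Hub; split; auto).
  assert (m <= t) by (apply Hlub; intros s [Hs _]; lra).
  exists m. split; [lra | split].
  - destruct (Rle_or_lt (g m) rho) as [h | h]; auto. exfalso.
    destruct (Hg m ltac:(lra) (g m - rho) ltac:(lra)) as [d [Hd Hd']].
    destruct (classic (exists s, S s /\ m - d < s)) as [[s [[Hs1 Hs2] Hs3]] | Hno].
    + assert (s <= m) by (apply Hub; split; auto).
      assert (Hsm : Rabs (s - m) < d) by (rewrite Rabs_left1 by lra; lra).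
      specialize (Hd' s Hs1 Hsm). apply Rabs_def2 in Hd'. lra.
    + assert (m <= m - d); [| lra]. apply Hlub. intros s Hs.
      destruct (Rle_or_lt s (m - d)) as [h' | h']; auto. exfalso; apply Hno; exists s; auto.
  - intros s Hs. destruct (Rle_or_lt (g s) rho) as [h | h]; auto.
    assert (s <= m) by (apply Hub; split; auto; lra). lra.
Qed.

Lemma limsup0_le_weaken f c1 c2 : limsup0_le f c1 -> c1 <= c2 -> limsup0_le f c2.
Proof.
  intros H Hc eps He. destruct (H eps He) as [d [Hd Hd']]. exists d; split; auto.
  intros t Ht. specialize (Hd' t Ht). lra.
Qed.

(** * Banach spaces and the input space *)

Lemma vscal_zero_l (B : Banach) (x : B) : vscal 0 x = vzero.
Proof.
  set (y := vscal 0 x).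
  assert (Hy : y = vadd y y) by (unfold y; rewrite <- vscal_distr_r; f_equal; ring).
  assert (Hyy : vadd (vadd y y) (vopp y) = y) by (rewrite <- vadd_assoc, vadd_opp, vadd_zero; auto).
  rewrite <- Hy, vadd_opp in Hyy. auto.
Qed.

Lemma vnorm_zero (B : Banach) : vnorm (@vzero B) = 0.
Proof. rewrite <- (vscal_zero_l B vzero), vnorm_scal, Rabs_R0. ring. Qed.

Lemma vnorm_gt0 (B : Banach) (x : B) : x <> vzero -> 0 < vnorm x.
Proof.
  intros H. destruct (vnorm_nonneg B x) as [h | h]; auto. exfalso; apply H, vnorm_eq0; auto.
Qed.

Lemma vopp_unique (B : Banach) (x y : B) : vadd y x = vzero -> y = vopp x.
Proof.
  intros H.
  rewrite <- (vadd_zero B y), <- (vadd_opp B x), vadd_assoc, H, vadd_comm, vadd_zero. auto.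
Qed.

Lemma vopp_scal (B : Banach) (x : B) : vopp x = vscal (-1) x.
Proof.
  symmetry. apply vopp_unique. rewrite <- (vscal_one B x) at 2. rewrite <- vscal_distr_r.
  replace (-1 + 1) with 0 by ring. apply vscal_zero_l.
Qed.

Lemma vopp_zero (B : Banach) : vopp (@vzero B) = vzero.
Proof. rewrite <- (vadd_zero B (vopp vzero)), vadd_comm, vadd_opp. auto. Qed.

Lemma vnorm_opp (B : Banach) (x : B) : vnorm (vopp x) = vnorm x.
Proof. rewrite vopp_scal, vnorm_scal, Rabs_left by lra. ring. Qed.

Lemma vdist_sym (B : Banach) (x y : B) : vdist x y = vdist y x.
Proof.
  unfold vdist. rewrite <- vnorm_opp. f_equal.
  rewrite !vopp_scal, vscal_distr_l, vscal_assoc.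
  replace (-1 * -1) with 1 by ring. rewrite vscal_one. apply vadd_comm.
Qed.

Lemma vnorm_le_add_vdist (B : Banach) (x y : B) : vnorm y <= vnorm x + vdist y x.
Proof.
  unfold vdist.
  assert (Hy : y = vadd (vadd y (vopp x)) x).
  { rewrite <- vadd_assoc, (vadd_comm B (vopp x) x), vadd_opp, vadd_zero. auto. }
  rewrite Hy at 1. rewrite Rplus_comm. apply vnorm_triangle.
Qed.

Lemma Rabs_vnorm_sub_le (B : Banach) (x y : B) : Rabs (vnorm y - vnorm x) <= vdist y x.
Proof.
  pose proof (vnorm_le_add_vdist B x y). pose proof (vnorm_le_add_vdist B y x) as Hx.
  rewrite vdist_sym in Hx. apply Rabs_le. lra.
Qed.

Definition shift {U : Banach} (t : R) (u : R -> U) : R -> U := fun s => u (t + s).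

Lemma outer_le_translate A c t : outer_le A c -> outer_le (fun s => A (t + s)) c.
Proof.
  intros H eta He. destruct (H eta He) as [a [b [Hab [Hcov Hsum]]]].
  exists (fun n => a n - t), (fun n => b n - t). split; [| split].
  - intros n; specialize (Hab n); lra.
  - intros s Hs. destruct (Hcov _ Hs) as [n Hn]. exists n. lra.
  - intros n. rewrite (sum_eq _ (fun k => b k - a k)); [apply Hsum | intros; ring].
Qed.

Lemma outer_le_subset A B c : outer_le A c -> (forall s, B s -> A s) -> outer_le B c.
Proof.
  intros H HBA eta He. destruct (H eta He) as [a [b [H1 [H2 H3]]]].
  exists a, b. split; [| split]; auto.
Qed.

Lemma null_set_shift A t : 0 <= t -> null_set (fun s => 0 <= s /\ A s) ->
  null_set (fun s => 0 <= s /\ A (t + s)).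
Proof.
  intros Ht H. eapply outer_le_subset; [apply (outer_le_translate _ 0 t H) |].
  intros s [Hs HA]. split; [lra | auto].
Qed.

Lemma leb_measurable_translate A t : leb_measurable A -> leb_measurable (fun s => A (t + s)).
Proof.
  intros H eps He. destruct (H eps He) as [G [HG [HAG HGA]]].
  exists (fun s => G (t + s)). split; [| split].
  - intros x Hx. destruct (HG _ Hx) as [d [Hd Hd']]. exists d. split; auto.
    intros y Hy. apply Hd'. replace (t + y - (t + x)) with (y - x) by ring. auto.
  - intros s Hs. apply HAG; auto.
  - apply (outer_le_translate (fun s => G s /\ ~ A s) eps t HGA).
Qed.

Definition shift_simple {U : Banach} (t : R) (l : list ((R -> Prop) * U)) :
  list ((R -> Prop) * U) :=
  map (fun p => ((fun s => fst p (t + s)), snd p)) l.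

Lemma simple_eval_shift {U : Banach} t (l : list ((R -> Prop) * U)) s :
  simple_eval (shift_simple t l) s = simple_eval l (t + s).
Proof. induction l as [| p l IH]; simpl; auto. rewrite IH. reflexivity. Qed.

Lemma simple_fun_shift {U : Banach} t (l : list ((R -> Prop) * U)) :
  simple_fun l -> simple_fun (shift_simple t l).
Proof.
  unfold simple_fun, shift_simple. induction 1; simpl; constructor; auto.
  apply leb_measurable_translate; auto.
Qed.

Lemma Linf_shift {U : Banach} (u : R -> U) t : 0 <= t -> Linf u -> Linf (shift t u).
Proof.
  intros Ht [[sq [Hsimple Hconv]] [M HM]]. split.
  - exists (fun n => shift_simple t (sq n)). split; [intros n; apply simple_fun_shift; auto |].
    eapply outer_le_subset; [apply (null_set_shift _ t Ht Hconv) |].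
    intros s [Hs Hnc]. split; auto. intros Hc. apply Hnc.
    intros eps He. destruct (Hc eps He) as [N HN]. exists N. intros n Hn.
    rewrite simple_eval_shift. apply HN; auto.
  - exists M. apply (null_set_shift (fun s => vnorm (u s) > M) t Ht HM).
Qed.

Definition essential_bounds {U : Banach} (u : R -> U) (M : R) : Prop :=
  0 <= M /\ null_set (fun t => 0 <= t /\ vnorm (u t) > M).

Lemma linf_norm_is_glb {U : Banach} (u : R -> U) :
  ess_bounded u -> is_glb (essential_bounds u) (linf_norm u).
Proof.
  intros [M HM]. unfold linf_norm. apply epsilon_spec. apply glb_of_nonneg.
  - exists (Rmax 0 M). split; [apply Rmax_l |]. eapply outer_le_subset; [apply HM |].
    intros t [Ht Hn]. split; auto. pose proof (Rmax_r 0 M). lra.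
  - intros x [Hx _]; auto.
Qed.

Lemma linf_norm_nonneg {U : Banach} (u : R -> U) : Linf u -> 0 <= linf_norm u.
Proof.
  intros [_ Hb]. apply (proj2 (linf_norm_is_glb u Hb)). intros x [Hx _]; auto.
Qed.

Lemma linf_norm_shift_le {U : Banach} (u : R -> U) t : 0 <= t -> Linf u ->
  linf_norm (shift t u) <= linf_norm u.
Proof.
  intros Ht Hu. destruct (Linf_shift u t Ht Hu) as [_ Hb'].
  destruct Hu as [_ Hb].
  apply (proj2 (linf_norm_is_glb u Hb)). intros M [HM0 HMnull].
  apply (proj1 (linf_norm_is_glb _ Hb')). split; auto.
  apply (null_set_shift (fun s => vnorm (u s) > M) t Ht HMnull).
Qed.

(** * From uniform estimates to ISS *)

Definition uniformly_locally_stable {X U : Banach} (phi : R -> X -> (R -> U) -> X) : Prop :=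
  forall eps, eps > 0 -> exists eta, eta > 0 /\ forall x u t, Linf u -> vnorm x <= eta ->
    linf_norm u <= eta -> 0 <= t -> vnorm (phi t x u) <= eps.

Definition uniformly_globally_bounded {X U : Banach} (phi : R -> X -> (R -> U) -> X) : Prop :=
  forall R0, 0 <= R0 -> exists M, forall x u t, Linf u -> vnorm x <= R0 ->
    linf_norm u <= R0 -> 0 <= t -> vnorm (phi t x u) <= M.

Definition bounded_reaching_time {X U : Banach} (phi : R -> X -> (R -> U) -> X)
    (alpha sigma psi : R -> R) : Prop :=
  forall x u rho, Linf u -> 0 < rho -> 2 * sigma (linf_norm u) <= alpha rho ->
    exists s, 0 <= s <= 2 * psi (vnorm x) / alpha rho + 1 /\ vnorm (phi s x u) < rho.

Lemma phi_split {X U : Banach} (phi : R -> X -> (R -> U) -> X) x u s t :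
  control_system phi -> Linf u -> 0 <= s <= t ->
  phi t x u = phi (t - s) (phi s x u) (shift s u).
Proof.
  intros [_ [_ [_ Hcocycle]]] Hu Hst. unfold shift. rewrite Hcocycle by (auto; lra).
  f_equal. ring.
Qed.

Lemma Kinf_dominates alpha g : class_Kinf alpha -> class_K g ->
  exists rho, class_K rho /\ forall v, 0 <= v -> g v <= alpha (rho v).
Proof.
  intros Hal Hg. pose proof Hal as [HalK _].
  destruct (K_majorant (fun v p => 0 <= p /\ alpha p <= g v)) as [rho [Hrho Hmaj]].
  - intros eps He. pose proof (K_pos alpha eps HalK He).
    destruct (K_small g Hg (alpha eps / 2) ltac:(lra)) as [d [Hd Hd']].
    exists d. split; auto. intros r p Hr [Hp Hap].
    destruct (Rle_or_lt p eps) as [h | h]; auto.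
    pose proof (K_lt alpha eps p HalK ltac:(lra) h). pose proof (Hd' r Hr). lra.
  - intros R0. set (R1 := Rmax 0 R0). pose proof (Rmax_l 0 R0) as HR1. pose proof (Rmax_r 0 R0).
    destruct (Kinf_exceeds alpha (g R1) Hal (K_nonneg g R1 Hg HR1)) as [M [HM HM']].
    exists M. intros r p Hr [Hp Hap]. destruct (Rle_or_lt p M) as [h | h]; auto.
    pose proof (K_lt alpha M p HalK ltac:(lra) h).
    pose proof (K_le g r R1 Hg ltac:(lra) ltac:(unfold R1; lra)). lra.
  - exists rho. split; auto. intros v Hv.
    destruct (Rle_or_lt (g v) (alpha (rho v))) as [h | h]; auto. exfalso.
    pose proof (K_nonneg rho v Hrho Hv) as Hrv. pose proof HalK as [_ [Hcont _]].
    destruct (Hcont (rho v) Hrv (g v - alpha (rho v)) ltac:(lra)) as [d [Hd Hd']].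
    assert (Hdist : Rabs (rho v + d / 2 - rho v) < d) by (rewrite Rabs_right; lra).
    specialize (Hd' (rho v + d / 2) ltac:(lra) Hdist). apply Rabs_def2 in Hd'.
    assert (rho v + d / 2 <= rho v) by (apply Hmaj; auto; split; lra).
    lra.
Qed.

Lemma K_majorant_max g rho : class_K g -> class_K rho ->
  exists gam, class_K gam /\ forall v, 0 <= v -> g (Rmax (rho v) v) <= gam v.
Proof.
  intros Hg Hrho.
  destruct (K_majorant (fun v p => p = g (Rmax (rho v) v))) as [gam [Hgam Hmaj]].
  - intros eps He. destruct (K_small g Hg eps He) as [d1 [Hd1 Hd1']].
    destruct (K_small rho Hrho d1 Hd1) as [d2 [Hd2 Hd2']].
    exists (Rmin d1 d2). split; [apply Rmin_pos; lra |].
    intros r p Hr ->. pose proof (Rmin_l d1 d2). pose proof (Rmin_r d1 d2).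
    pose proof (Hd2' r ltac:(lra)). pose proof (K_nonneg rho r Hrho (proj1 Hr)).
    apply Hd1'. unfold Rmax; destruct Rle_dec; lra.
  - intros R0. set (R1 := Rmax 0 R0). exists (g (Rmax (rho R1) R1)).
    intros r p Hr ->. pose proof (Rmax_l 0 R0). pose proof (Rmax_r 0 R0).
    pose proof (K_le rho r R1 Hrho (proj1 Hr) ltac:(unfold R1; lra)).
    pose proof (K_nonneg rho r Hrho (proj1 Hr)).
    apply K_le; [exact Hg | unfold Rmax; destruct Rle_dec; lra |].
    unfold Rmax at 1 2; repeat destruct Rle_dec; unfold R1 in *; lra.
  - exists gam. split; [exact Hgam |]. intros v Hv. apply Hmaj; auto.
Qed.

Section ISS_characterization.

Variables (X U : Banach) (phi : R -> X -> (R -> U) -> X) (alpha sigma psi : R -> R).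
Hypothesis phi_system : control_system phi.
Hypothesis alpha_Kinf : class_Kinf alpha.
Hypothesis sigma_K : class_K sigma.
Hypothesis psi_K : class_K psi.
Hypothesis phi_reach : bounded_reaching_time phi alpha sigma psi.

Lemma uniform_K_bound : uniformly_locally_stable phi -> uniformly_globally_bounded phi ->
  exists gB, class_K gB /\ forall x u t r, Linf u -> vnorm x <= r -> linf_norm u <= r ->
    0 <= t -> vnorm (phi t x u) <= gB r.
Proof.
  intros HULS HUGB.
  destruct (K_majorant (fun r p => exists x u t, Linf u /\ vnorm x <= r /\
                          linf_norm u <= r /\ 0 <= t /\ p = vnorm (phi t x u)))
    as [gB [HgB Hmaj]].
  - intros eps He. destruct (HULS eps He) as [eta [Heta Heta']]. exists eta. split; auto.
    intros r p Hr [x [u [t [Hu [Hx [Hv [Ht ->]]]]]]]. apply Heta'; auto; lra.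
  - intros R0. destruct (HUGB (Rmax 0 R0) (Rmax_l _ _)) as [M HM]. exists M.
    intros r p Hr [x [u [t [Hu [Hx [Hv [Ht ->]]]]]]]. pose proof (Rmax_r 0 R0).
    apply HM; auto; lra.
  - exists gB. split; auto. intros x u t r Hu Hx Hv Ht.
    apply Hmaj; [pose proof (vnorm_nonneg _ x); lra |]. exists x, u, t. auto 6.
Qed.

Variables gB rho gam : R -> R.
Hypothesis gB_K : class_K gB.
Hypothesis gB_bound : forall x u t r, Linf u -> vnorm x <= r -> linf_norm u <= r ->
  0 <= t -> vnorm (phi t x u) <= gB r.
Hypothesis rho_K : class_K rho.
Hypothesis rho_gain : forall v, 0 <= v -> 2 * sigma v <= alpha (rho v).
Hypothesis gam_K : class_K gam.
Hypothesis gam_bound : forall v, 0 <= v -> gB (Rmax (rho v) v) <= gam v.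

Definition overshoot (r t p : R) : Prop :=
  exists x u, Linf u /\ vnorm x <= r /\ p = vnorm (phi t x u) - gam (linf_norm u).

Lemma bound_after_entry x u s t r : Linf u -> 0 <= s <= t ->
  vnorm (phi s x u) <= r -> linf_norm u <= r -> vnorm (phi t x u) <= gB r.
Proof.
  intros Hu Hst Hs Hv. rewrite (phi_split phi x u s t phi_system Hu Hst).
  pose proof (linf_norm_shift_le u s ltac:(lra) Hu).
  apply gB_bound; [apply Linf_shift; auto; lra | lra | lra | lra].
Qed.

Lemma small_state_bound x u t : Linf u -> 0 <= t -> vnorm x <= linf_norm u ->
  vnorm (phi t x u) <= gam (linf_norm u).
Proof.
  intros Hu Ht Hx. pose proof (linf_norm_nonneg u Hu).
  pose proof (Rmax_r (rho (linf_norm u)) (linf_norm u)).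
  eapply Rle_trans; [apply (gB_bound x u t (Rmax (rho (linf_norm u)) (linf_norm u))); auto; lra |].
  apply gam_bound; auto.
Qed.

Lemma overshoot_le_gB r t p : 0 <= t -> overshoot r t p -> p <= gB (Rmax 0 r).
Proof.
  intros Ht [x [u [Hu [Hx ->]]]].
  pose proof (linf_norm_nonneg u Hu) as Hv. pose proof (K_nonneg gam _ gam_K Hv).
  pose proof (Rmax_l 0 r) as Hr0. pose proof (Rmax_r 0 r).
  destruct (Rle_or_lt (vnorm x) (linf_norm u)) as [h | h].
  - pose proof (small_state_bound x u t Hu Ht h). pose proof (K_nonneg gB _ gB_K Hr0). lra.
  - assert (vnorm (phi t x u) <= gB (Rmax 0 r)) by (apply gB_bound; auto; lra). lra.
Qed.

Lemma overshoot_vanishes : vanishes_at_zero overshoot.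
Proof.
  intros eps He. destruct (K_small gB gB_K eps He) as [d [Hd Hd']]. exists d. split; auto.
  intros r t p Hr Ht Hp. pose proof (overshoot_le_gB r t p Ht Hp) as Hle.
  rewrite Rmax_right in Hle by lra. pose proof (Hd' r Hr). lra.
Qed.

Lemma overshoot_bounded : bounded_on_balls overshoot.
Proof.
  intros R0. exists (gB (Rmax 0 R0)). intros r t p Hr Ht Hp.
  pose proof (overshoot_le_gB r t p Ht Hp). pose proof (Rmax_l 0 R0). pose proof (Rmax_r 0 R0).
  assert (gB (Rmax 0 r) <= gB (Rmax 0 R0)) by (apply K_le; auto; rewrite Rmax_right; lra).
  lra.
Qed.

Lemma entry_before x u rr a R1 : Linf u -> 0 < rr -> 2 * sigma (linf_norm u) <= alpha rr ->
  0 < a -> a <= alpha rr -> vnorm x <= R1 ->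
  exists s, 0 <= s <= 2 * psi R1 / a + 1 /\ vnorm (phi s x u) < rr.
Proof.
  intros Hu Hrr Hgain Ha Hal Hx.
  destruct (phi_reach x u rr Hu Hrr Hgain) as [s [Hs Hs']]. exists s. split; auto.
  assert (2 * psi (vnorm x) / alpha rr <= 2 * psi R1 / a); [| lra].
  pose proof (K_nonneg psi _ psi_K (vnorm_nonneg _ x)).
  pose proof (K_le psi _ _ psi_K (vnorm_nonneg _ x) Hx).
  apply Rdiv_le_compat; lra.
Qed.

Lemma overshoot_decays : decays_uniformly overshoot.
Proof.
  intros eps He R0. pose proof alpha_Kinf as [alpha_K _].
  destruct (K_small gB gB_K eps He) as [rho0 [Hrho0 HgB0]].
  pose proof (K_pos alpha rho0 alpha_K Hrho0) as Halrho0.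
  destruct (K_small sigma sigma_K (alpha rho0 / 2) ltac:(lra)) as [d [Hd Hsig]].
  set (v0 := Rmin rho0 d).
  assert (Hv0rho0 : v0 <= rho0) by apply Rmin_l. assert (Hv0d : v0 <= d) by apply Rmin_r.
  assert (Hv0 : 0 < v0) by (apply Rmin_pos; lra).
  pose proof (K_pos rho v0 rho_K Hv0) as Hrhov0.
  set (a := Rmin (alpha rho0) (alpha (rho v0))).
  assert (Ha1 : a <= alpha rho0) by apply Rmin_l.
  assert (Ha2 : a <= alpha (rho v0)) by apply Rmin_r.
  assert (Ha : 0 < a) by (apply Rmin_pos; [lra | apply K_pos; auto]).
  exists (2 * psi (Rmax 0 R0) / a + 1).
  intros r t p Hr Ht HT [x [u [Hu [Hx ->]]]].
  assert (HxR : vnorm x <= Rmax 0 R0) by (pose proof (Rmax_r 0 R0); lra).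
  pose proof (linf_norm_nonneg u Hu) as Hv. pose proof (K_nonneg gam _ gam_K Hv).
  destruct (Rle_or_lt (linf_norm u) v0) as [Hsmall | Hbig].
  - assert (Hgain : 2 * sigma (linf_norm u) <= alpha rho0)
      by (pose proof (Hsig (linf_norm u) ltac:(lra)); lra).
    destruct (entry_before x u rho0 a _ Hu Hrho0 Hgain Ha Ha1 HxR) as [s [Hs Hs']].
    pose proof (bound_after_entry x u s t rho0 Hu ltac:(lra) ltac:(lra) ltac:(lra)).
    pose proof (HgB0 rho0 ltac:(lra)). lra.
  - pose proof (K_le rho v0 _ rho_K ltac:(lra) (Rlt_le _ _ Hbig)) as Hrho_le.
    pose proof (K_le alpha (rho v0) _ alpha_K ltac:(lra) Hrho_le).
    destruct (entry_before x u (rho (linf_norm u)) a _ Hu ltac:(lra) (rho_gain _ Hv) Ha ltac:(lra)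
                HxR) as [s [Hs Hs']].
    pose proof (Rmax_l (rho (linf_norm u)) (linf_norm u)).
    pose proof (Rmax_r (rho (linf_norm u)) (linf_norm u)).
    pose proof (bound_after_entry x u s t (Rmax (rho (linf_norm u)) (linf_norm u)) Hu
                  ltac:(lra) ltac:(lra) ltac:(lra)).
    pose proof (gam_bound _ Hv). lra.
Qed.

End ISS_characterization.

Theorem ISS_of_uniform_estimates {X U : Banach} (phi : R -> X -> (R -> U) -> X)
    (alpha sigma psi : R -> R) :
  control_system phi -> class_Kinf alpha -> class_K sigma -> class_K psi ->
  uniformly_locally_stable phi -> uniformly_globally_bounded phi ->
  bounded_reaching_time phi alpha sigma psi -> ISS phi.
Proof.
  intros Hcs Hal Hsg Hpsi HULS HUGB Hreach.
  destruct (uniform_K_bound X U phi HULS HUGB) as [gB [HgB HgB_bound]].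
  destruct (Kinf_dominates alpha (fun v => 2 * sigma v) Hal (K_scale sigma 2 Hsg ltac:(lra)))
    as [rho [Hrho Hrho_gain]].
  destruct (K_majorant_max gB rho HgB Hrho) as [gam [Hgam Hgam_bound]].
  destruct (KL_majorant (overshoot X U phi gam)) as [beta [Hbeta Hmaj]].
  - apply (overshoot_vanishes X U phi gB rho gam); auto.
  - apply (overshoot_bounded X U phi gB rho gam); auto.
  - apply (overshoot_decays X U phi alpha sigma psi Hcs Hal Hsg Hpsi Hreach gB rho gam); auto.
  - exists beta, gam. split; [exact Hbeta | split; [exact Hgam |]].
    intros x u t Hu Ht.
    assert (vnorm (phi t x u) - gam (linf_norm u) <= beta (vnorm x) t); [| lra].
    apply Hmaj; [apply vnorm_nonneg | exact Ht |]. exists x, u. split; [exact Hu | split; [lra | ring]].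
Qed.

(** * Consequences of a non-coercive ISS Lyapunov function *)

Lemma vnorm_traj_continuous {X U : Banach} (phi : R -> X -> (R -> U) -> X) x u a b :
  control_system phi -> Linf u -> 0 <= a ->
  continuous_on_interval (fun s => vnorm (phi s x u)) a b.
Proof.
  intros [_ [_ [Hcont _]]] Hu Ha s Hs eps He.
  destruct (Hcont x u Hu s ltac:(lra) eps He) as [d [Hd Hd']].
  exists d. split; auto. intros s' Hs' Hss.
  eapply Rle_lt_trans; [apply Rabs_vnorm_sub_le | apply Hd'; auto; lra].
Qed.

Section Lyapunov.

Variables (X U : Banach) (phi : R -> X -> (R -> U) -> X) (V : X -> R) (alpha sigma psi : R -> R).
Hypothesis phi_system : control_system phi.
Hypothesis V_continuous : continuous_on_X V.
Hypothesis V_nonneg : forall x, 0 <= V x.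
Hypothesis alpha_Kinf : class_Kinf alpha.
Hypothesis sigma_K : class_K sigma.
Hypothesis psi_K : class_K psi.
Hypothesis V_le_psi : forall x, V x <= psi (vnorm x).
Hypothesis V_dini : forall x u, Linf u ->
  dini_le phi V x u (- alpha (vnorm x) + sigma (linf_norm u)).

Let alpha_K : class_K alpha := proj1 alpha_Kinf.

Lemma V_traj_continuous x u a b : Linf u -> 0 <= a ->
  continuous_on_interval (fun s => V (phi s x u)) a b.
Proof.
  pose proof phi_system as [_ [_ [Hcont _]]]. intros Hu Ha s Hs eps He.
  destruct (V_continuous (phi s x u) eps He) as [d1 [Hd1 Hd1']].
  destruct (Hcont x u Hu s ltac:(lra) d1 Hd1) as [d [Hd Hd']].
  exists d. split; auto. intros s' Hs' Hss. apply Hd1'. apply Hd'; auto. lra.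
Qed.

(* The shifted input has no larger norm, so the Lyapunov inequality at [phi s x u]
   holds with the gain of the original input. *)
Lemma V_dini_along_traj x u s : Linf u -> 0 <= s ->
  limsup0_le (fun h => (V (phi (s + h) x u) - V (phi s x u)) / h)
    (- alpha (vnorm (phi s x u)) + sigma (linf_norm u)).
Proof.
  intros Hu Hs. pose proof phi_system as [_ [_ [_ Hcocycle]]].
  pose proof (V_dini (phi s x u) (shift s u) (Linf_shift u s Hs Hu)) as Hd.
  assert (Hgain : sigma (linf_norm (shift s u)) <= sigma (linf_norm u)).
  { apply K_le; auto; [apply linf_norm_nonneg, Linf_shift |]; auto. apply linf_norm_shift_le; auto. }
  intros eps He. destruct (Hd eps He) as [d [Hd0 Hd']]. exists d. split; auto.
  intros h Hh. specialize (Hd' h Hh). simpl in Hd'.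
  unfold shift in Hd', Hgain. rewrite Hcocycle in Hd' by (auto; lra). lra.
Qed.

Lemma V_decrease x u a b rho : Linf u -> 0 <= a <= b -> 0 <= rho ->
  2 * sigma (linf_norm u) <= alpha rho ->
  (forall s, a < s < b -> rho <= vnorm (phi s x u)) ->
  V (phi b x u) <= V (phi a x u) - alpha rho / 2 * (b - a).
Proof.
  intros Hu Hab Hrho Hgain Hout.
  apply (decrease_of_dini_bound (fun s => V (phi s x u))); [lra | apply V_traj_continuous; auto; lra |].
  intros s Hs. eapply limsup0_le_weaken; [apply V_dini_along_traj; auto; lra |].
  pose proof (K_le alpha rho _ alpha_K Hrho (Hout s Hs)). lra.
Qed.

Lemma V_bounded_along x u rho t : Linf u -> 0 <= rho ->
  2 * sigma (linf_norm u) <= alpha rho -> 0 <= t ->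
  V (phi t x u) <= Rmax (psi (vnorm x)) (psi rho).
Proof.
  intros Hu Hrho Hgain Ht. pose proof (K_nonneg alpha rho alpha_K Hrho).
  pose proof (Rmax_l (psi (vnorm x)) (psi rho)). pose proof (Rmax_r (psi (vnorm x)) (psi rho)).
  destruct (classic (exists s0, 0 <= s0 <= t /\ vnorm (phi s0 x u) <= rho)) as [Hin | Hout].
  - destruct (last_time_below (fun s => vnorm (phi s x u)) t rho Ht
                (vnorm_traj_continuous phi x u 0 t phi_system Hu ltac:(lra)) Hin)
      as [m [Hm [Hm1 Hm2]]].
    assert (V (phi t x u) <= V (phi m x u) - alpha rho / 2 * (t - m)).
    { apply V_decrease; auto; try lra. intros s Hs. left. apply Hm2. lra. }
    pose proof (V_le_psi (phi m x u)). pose proof (K_le psi _ _ psi_K (vnorm_nonneg _ _) Hm1).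
    assert (0 <= alpha rho / 2 * (t - m)) by (apply Rmult_le_pos; lra). lra.
  - assert (Hdec : V (phi t x u) <= V (phi 0 x u) - alpha rho / 2 * (t - 0)).
    { apply V_decrease; auto; try lra. intros s Hs.
      destruct (Rle_or_lt rho (vnorm (phi s x u))) as [h | h]; auto.
      exfalso. apply Hout. exists s. split; lra. }
    destruct phi_system as [Hphi0 _]. rewrite Hphi0 in Hdec by auto.
    pose proof (V_le_psi x). assert (0 <= alpha rho / 2 * (t - 0)) by (apply Rmult_le_pos; lra).
    lra.
Qed.

Lemma lyapunov_reaching_time : bounded_reaching_time phi alpha sigma psi.
Proof.
  intros x u rho Hu Hrho Hgain. pose proof (K_pos alpha rho alpha_K Hrho).
  pose proof (K_nonneg psi (vnorm x) psi_K (vnorm_nonneg _ _)).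
  set (T := 2 * psi (vnorm x) / alpha rho + 1).
  assert (HT : 0 <= T) by (pose proof (Rdiv_nonneg (2 * psi (vnorm x)) (alpha rho)); unfold T; lra).
  destruct (classic (exists s, 0 <= s <= T /\ vnorm (phi s x u) < rho)) as [Hin | Hout]; auto.
  exfalso.
  assert (Hdec : V (phi T x u) <= V (phi 0 x u) - alpha rho / 2 * (T - 0)).
  { apply V_decrease; auto; try lra. intros s Hs.
    destruct (Rle_or_lt rho (vnorm (phi s x u))) as [h | h]; auto.
    exfalso. apply Hout. exists s. split; lra. }
  destruct phi_system as [Hphi0 _]. rewrite Hphi0 in Hdec by auto.
  assert (alpha rho / 2 * (T - 0) = psi (vnorm x) + alpha rho / 2) by (unfold T; field; lra).
  pose proof (V_le_psi x). pose proof (V_nonneg (phi T x u)). lra.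
Qed.

(* On a unit window before [t] the state stays outside the CEP ball, which costs [V] a fixed
   amount; starting from a small state [V] is too small to pay it. *)
Lemma lyapunov_locally_stable : CEP phi -> uniformly_locally_stable phi.
Proof.
  intros [_ Hcep] eps He.
  destruct (Hcep eps 1 He ltac:(lra)) as [delta [Hdelta Hsmall]].
  pose proof (K_pos alpha delta alpha_K Hdelta).
  destruct (K_small psi psi_K (alpha delta / 4) ltac:(lra)) as [d1 [Hd1 Hpsi_small]].
  set (r1 := Rmin delta d1).
  assert (Hr1d : r1 <= delta) by apply Rmin_l. assert (Hr1d1 : r1 <= d1) by apply Rmin_r.
  assert (Hr1 : 0 < r1) by (apply Rmin_pos; lra).
  pose proof (K_pos alpha r1 alpha_K Hr1).
  destruct (K_small sigma sigma_K (alpha r1 / 2) ltac:(lra)) as [d2 [Hd2 Hsig_small]].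
  exists (Rmin r1 d2). split; [apply Rmin_pos; lra |].
  pose proof (Rmin_l r1 d2). pose proof (Rmin_r r1 d2).
  intros x u t Hu Hx Hv Ht. pose proof (linf_norm_nonneg u Hu).
  assert (Hgain : 2 * sigma (linf_norm u) <= alpha r1)
    by (pose proof (Hsig_small (linf_norm u) ltac:(lra)); lra).
  pose proof (K_le alpha r1 delta alpha_K ltac:(lra) Hr1d).
  destruct (Rle_or_lt (vnorm (phi t x u)) eps) as [h | Hbig]; auto. exfalso.
  destruct (Rle_or_lt t 1) as [Ht1 | Ht1].
  { pose proof (Hsmall t x u ltac:(lra) Hu ltac:(lra) ltac:(lra)). lra. }
  assert (Hout : forall s, t - 1 < s < t -> delta <= vnorm (phi s x u)).
  { intros s Hs. destruct (Rle_or_lt delta (vnorm (phi s x u))) as [h | h]; auto. exfalso.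
    rewrite (phi_split phi x u s t phi_system Hu ltac:(lra)) in Hbig.
    pose proof (linf_norm_shift_le u s ltac:(lra) Hu).
    pose proof (Hsmall (t - s) (phi s x u) (shift s u) ltac:(lra) (Linf_shift u s ltac:(lra) Hu)
                  ltac:(lra) ltac:(lra)).
    lra. }
  assert (V (phi t x u) <= V (phi (t - 1) x u) - alpha delta / 2 * (t - (t - 1)))
    by (apply V_decrease; auto; lra).
  pose proof (V_bounded_along x u r1 (t - 1) Hu ltac:(lra) Hgain ltac:(lra)).
  pose proof (K_le psi (vnorm x) r1 psi_K (vnorm_nonneg _ _) ltac:(lra)).
  pose proof (Hpsi_small r1 ltac:(lra)).
  assert (Rmax (psi (vnorm x)) (psi r1) <= alpha delta / 4) by (unfold Rmax; destruct Rle_dec; lra).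
  pose proof (V_nonneg (phi t x u)). lra.
Qed.

(* Past the horizon [h] the state must have visited the [rho1]-ball during the last [h] time
   units, since otherwise [V] would have to drop below zero; BRS bounds the rest. *)
Lemma lyapunov_globally_bounded : BRS phi -> uniformly_globally_bounded phi.
Proof.
  intros Hbrs R0 HR0.
  destruct (Kinf_exceeds alpha (2 * sigma R0) alpha_Kinf
              ltac:(pose proof (K_nonneg sigma R0 sigma_K HR0); lra)) as [rho1 [Hrho1 Hgain1]].
  set (K := Rmax (psi R0) (psi rho1)).
  pose proof (K_nonneg psi R0 psi_K HR0). pose proof (Rmax_l (psi R0) (psi rho1)).
  pose proof (K_pos alpha rho1 alpha_K Hrho1).
  set (h := 2 * K / alpha rho1 + 1).
  assert (Hh : 1 <= h) by (pose proof (Rdiv_nonneg (2 * K) (alpha rho1)); unfold h, K in *; lra).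
  destruct (Hbrs (R0 + rho1 + 1) h ltac:(lra) ltac:(lra)) as [M HM].
  exists M. intros x u t Hu Hx Hv Ht. pose proof (linf_norm_nonneg u Hu) as Hv0.
  assert (Hgain : 2 * sigma (linf_norm u) <= alpha rho1)
    by (pose proof (K_le sigma _ _ sigma_K Hv0 Hv); lra).
  destruct (Rle_or_lt t h) as [Hth | Hth]; [apply HM; auto; lra |].
  destruct (classic (exists s, t - h <= s <= t /\ vnorm (phi s x u) <= rho1))
    as [[s [Hs Hs']] | Hout].
  - rewrite (phi_split phi x u s t phi_system Hu ltac:(lra)).
    pose proof (linf_norm_shift_le u s ltac:(lra) Hu).
    apply HM; [lra | apply Linf_shift; auto; lra | lra | lra].
  - exfalso.
    assert (V (phi t x u) <= V (phi (t - h) x u) - alpha rho1 / 2 * (t - (t - h))).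
    { apply V_decrease; auto; try lra. intros s Hs.
      destruct (Rle_or_lt rho1 (vnorm (phi s x u))) as [q | q]; auto.
      exfalso; apply Hout; exists s; split; lra. }
    pose proof (V_bounded_along x u rho1 (t - h) Hu ltac:(lra) Hgain ltac:(lra)).
    assert (Rmax (psi (vnorm x)) (psi rho1) <= K).
    { pose proof (K_le psi _ _ psi_K (vnorm_nonneg _ _) Hx). unfold K, Rmax in *.
      repeat destruct Rle_dec; lra. }
    assert (alpha rho1 / 2 * (t - (t - h)) = K + alpha rho1 / 2) by (unfold h; field; lra).
    pose proof (V_nonneg (phi t x u)). lra.
Qed.

End Lyapunov.

(* Rescaling a nonzero vector gives nonzero states of arbitrarily small norm, on which
   [V] is squeezed below [psi]; continuity then forces [V 0 <= 0 = psi 0]. *)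
Lemma V_le_psi_everywhere {X : Banach} (V : X -> R) psi (x1 : X) :
  x1 <> vzero -> continuous_on_X V -> class_K psi ->
  (forall x, x <> vzero -> V x <= psi (vnorm x)) -> forall y, V y <= psi (vnorm y).
Proof.
  intros Hx1 HVc Hpsi HVb y.
  destruct (classic (y = vzero)) as [-> | Hy]; [| apply HVb; auto].
  rewrite vnorm_zero, (K_zero psi Hpsi).
  destruct (Rle_or_lt (V vzero) 0) as [h | h]; auto. exfalso.
  destruct (HVc vzero (V vzero / 2) ltac:(lra)) as [d [Hd Hd']].
  destruct (K_small psi Hpsi (V vzero / 4) ltac:(lra)) as [dp [Hdp Hdp']].
  pose proof (vnorm_gt0 X x1 Hx1).
  assert (Hm : 0 < Rmin d dp) by (apply Rmin_pos; lra).
  pose proof (Rmin_l d dp). pose proof (Rmin_r d dp).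
  set (lam := Rmin d dp / (2 * vnorm x1)).
  assert (Hlam : 0 < lam) by (apply Rdiv_lt_0_compat; lra).
  set (z := vscal lam x1).
  assert (Hnz : vnorm z = Rmin d dp / 2).
  { unfold z. rewrite vnorm_scal, Rabs_right by lra. unfold lam. field. lra. }
  assert (Hz : z <> vzero) by (intros E; rewrite E, vnorm_zero in Hnz; lra).
  assert (Hdz : vdist z vzero < d) by (unfold vdist; rewrite vopp_zero, vadd_zero; lra).
  specialize (Hd' z Hdz). apply Rabs_def2 in Hd'.
  pose proof (HVb z Hz). pose proof (Hdp' (vnorm z) ltac:(pose proof (vnorm_nonneg X z); lra)).
  lra.
Qed.

Lemma trivial_state_space_estimates {X U : Banach} (phi : R -> X -> (R -> U) -> X)
    alpha sigma psi :
  (forall y : X, vnorm y = 0) -> class_K alpha -> class_K psi ->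
  uniformly_locally_stable phi /\ uniformly_globally_bounded phi /\
  bounded_reaching_time phi alpha sigma psi.
Proof.
  intros Hzero Hal Hpsi. split; [| split].
  - intros eps He. exists 1. split; [lra |]. intros. rewrite Hzero. lra.
  - intros R0 HR0. exists 0. intros. rewrite Hzero. lra.
  - intros x u rho Hu Hrho _. exists 0. rewrite (Hzero (phi 0 x u)). split; [| lra].
    pose proof (K_pos alpha rho Hal Hrho). pose proof (K_nonneg psi (vnorm x) Hpsi (vnorm_nonneg _ _)).
    pose proof (Rdiv_nonneg (2 * psi (vnorm x)) (alpha rho)). lra.
Qed.

Theorem mainTheorem9 (X U : Banach) (phi : R -> X -> (R -> U) -> X) :
  control_system phi -> CEP phi -> BRS phi ->
  (exists V : X -> R, noncoercive_ISS_Lyapunov phi V) ->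
  ISS phi.
Proof.
  intros Hcs Hcep Hbrs
    [V [HVc [HV0 [psi [alpha [sigma [[Hpsi _] [Hal [Hsg [HVpsi HVdini]]]]]]]]]].
  assert (Hest : uniformly_locally_stable phi /\ uniformly_globally_bounded phi /\
                 bounded_reaching_time phi alpha sigma psi).
  { destruct (classic (exists x1 : X, x1 <> vzero)) as [[x1 Hx1] | Htriv].
    - assert (HVb : forall y, V y <= psi (vnorm y)).
      { apply (V_le_psi_everywhere V psi x1 Hx1 HVc Hpsi). intros x Hx. apply HVpsi; auto. }
      split; [| split].
      + apply (lyapunov_locally_stable X U phi V alpha sigma psi); auto.
      + apply (lyapunov_globally_bounded X U phi V alpha sigma psi); auto.
      + apply (lyapunov_reaching_time X U phi V alpha sigma psi); auto.
    - apply trivial_state_space_estimates; [| apply Hal | exact Hpsi].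
      intros y. destruct (classic (y = vzero)) as [-> | Hy]; [apply vnorm_zero |].
      exfalso; apply Htriv; exists y; auto. }
  destruct Hest as [HULS [HUGB Hreach]].
  exact (ISS_of_uniform_estimates phi alpha sigma psi Hcs Hal Hsg Hpsi HULS HUGB Hreach).
Qed.
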